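(* Let $g:\mathbb{F}_{2^n}\to\mathbb{F}_2$ and let $u_1,\ldots,u_\tau$ be pairwise distinct elements of $\mathbb{F}_{2^n}$. The following are equivalent: 1) $D_{u_i}D_{u_j}g(x)=0$ for all $x$ and all $1\le i<j\le\tau$ (i.e. $g$ satisfies property $(\mathbf{P}_\tau)$ with defining set $\{u_1,\ldots,u_\tau\}$); 2) there exist Boolean functions $g_1,\ldots,g_\tau$ on $\mathbb{F}_{2^n}$ such that $g(x+\sum_{i=1}^\tau w_iu_i)=g(x)+\sum_{i=1}^\tau w_ig_i(x)$ for all $x\in\mathbb{F}_{2^n}$ and all $w=(w_1,\ldots,w_\tau)\in\mathbb{F}_2^\tau$. Moreover, if these hold, then the functions $g_i$ in 2) are exactly $g_i=D_{u_i}g$, $i=1,\ldots,\tau$.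
   Context: $D_ag(x)=g(x)+g(x+a)$; $D_aD_bg(x)=g(x)+g(x+a)+g(x+b)+g(x+a+b)$. A Boolean function $g$ satisfies property $(\mathbf{P}_\tau)$ with defining set $\{u_1,\ldots,u_\tau\}$ if $u_1,\ldots,u_\tau$ are pairwise distinct and $D_{u_i}D_{u_j}g=0$ for all $1\le i<j\le\tau$. *)

From HB Require Import structures.
From mathcomp Require Import all_boot all_order all_algebra all_field.
Set Implicit Arguments. Unset Strict Implicit. Unset Printing Implicit Defensive.
Import GRing.Theory.
Local Open Scope ring_scope.

(* Boolean functions F -> F_2 are modelled as F -> bool, with addition in F_2
   being xor (addb). *)

Definition Dder (F : zmodType) (a : F) (g : F -> bool) : F -> bool :=
  fun x => g x (+) g (x + a).

Definition prop_P (F : zmodType) (tau : nat) (u : 'I_tau -> F) (g : F -> bool) : Prop :=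
  injective u /\
  forall (i j : 'I_tau), (i < j)%N -> forall x, Dder (u i) (Dder (u j) g) x = false.

Definition cond2 (F : zmodType) (tau : nat) (u : 'I_tau -> F) (g : F -> bool)
    (gs : 'I_tau -> F -> bool) : Prop :=
  forall (x : F) (w : 'I_tau -> bool),
    g (x + \sum_(i < tau) (if w i then u i else 0)) =
    g x (+) \big[addb/false]_(i < tau) (w i && gs i x).

From HB Require Import structures.
From mathcomp Require Import all_boot all_order all_algebra all_field.
Import GRing.Theory.
Local Open Scope ring_scope.

(* If all mixed second derivatives D_a D_b g vanish, each first derivative
   D_a g is invariant under translation by the other shifts b, so translating
   by a sum of shifts one at a time adds exactly one first derivative per
   shift, evaluated at x itself.  Conversely, condition 2) for the subsets {i}
   and {i, j} identifies g_i = D_{u_i} g and forces D_{u_i} D_{u_j} g = 0. *)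

Lemma big_pred2_eq (R : Type) (idx : R) (op : Monoid.com_law idx) (I : finType)
    (i j : I) (F : I -> R) :
  i != j -> \big[op/idx]_(k | (k == i) || (k == j)) F k = op (F i) (F j).
Proof.
move=> ij; rewrite (bigD1 i) ?eqxx // (big_pred1 j) // => k /=.
by case: eqVneq => [->|_] /=; rewrite ?(negPf ij) ?andbT.
Qed.

Section Derivatives.
Context {F : zmodType}.
Implicit Types (a b x : F) (g h : F -> bool).

Lemma Dder_addr g a x : g (x + a) = g x (+) Dder a g x.
Proof. by rewrite /Dder addbA addbb. Qed.

Lemma DderC g a b x : Dder a (Dder b g) x = Dder b (Dder a g) x.
Proof.
rewrite /Dder (addrAC x a b).
by case: (g x); case: (g (x + a)); case: (g (x + b)); case: (g (x + b + a)).
Qed.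

Lemma Dder_eq0_addr h b x : Dder b h x = false -> h (x + b) = h x.
Proof. by rewrite Dder_addr => ->; rewrite addbF. Qed.

Lemma Dder_eq0_addr_sum (I : eqType) (v : I -> F) (s : seq I) h :
    (forall i, i \in s -> forall x, Dder (v i) h x = false) ->
  forall x, h (x + \sum_(i <- s) v i) = h x.
Proof.
elim: s => [|j s IHs] Dv x; first by rewrite big_nil addr0.
rewrite big_cons addrCA addrC Dder_eq0_addr; last by apply: Dv; rewrite inE eqxx.
by apply: IHs => i si; apply: Dv; rewrite inE si orbT.
Qed.

Lemma Dder_addr_sum (I : eqType) (v : I -> F) (s : seq I) g :
    uniq s ->
    (forall i j, i != j -> forall x, Dder (v i) (Dder (v j) g) x = false) ->
  forall x, g (x + \sum_(i <- s) v i) =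
            g x (+) \big[addb/false]_(i <- s) Dder (v i) g x.
Proof.
move=> + D2v; elim: s => [_ x | j s IHs /andP[js us] x].
  by rewrite !big_nil addr0 addbF.
have Dj_inv : Dder (v j) g (x + \sum_(i <- s) v i) = Dder (v j) g x.
  apply: Dder_eq0_addr_sum => i si y; rewrite D2v //.
  by apply: contraNneq js => <-.
by rewrite !big_cons addrCA addrC Dder_addr IHs // Dj_inv addbAC addbA.
Qed.

End Derivatives.

Section ConditionTwo.
Context {F : zmodType} {tau : nat} {u : 'I_tau -> F} {g : F -> bool}.

Lemma cond2P (gs : 'I_tau -> F -> bool) :
  cond2 u g gs <->
  (forall x (w : pred 'I_tau),
     g (x + \sum_(i | w i) u i) = g x (+) \big[addb/false]_(i | w i) gs i x).
Proof.
have sumE w : \sum_(i | w i) u i = \sum_i (if w i then u i else 0) := big_mkcond _ _.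
have xorE w x : \big[addb/false]_(i | w i) gs i x = \big[addb/false]_i (w i && gs i x).
  exact: big_mkcond.
split=> C x w.
  rewrite sumE xorE; exact: C.
rewrite -(sumE w) -(xorE w); exact: C.
Qed.

Lemma cond2_Dder :
    (forall i j, i != j -> forall x, Dder (u i) (Dder (u j) g) x = false) ->
  cond2 u g (fun i => Dder (u i) g).
Proof.
move=> D2u; apply/cond2P => x w.
rewrite -[\sum_(i | w i) _]big_filter -[\big[addb/false]_(i | w i) _]big_filter.
by rewrite Dder_addr_sum // filter_uniq ?index_enum_uniq.
Qed.

Lemma cond2_eq_Dder {gs} : cond2 u g gs -> forall i x, gs i x = Dder (u i) g x.
Proof.
move=> /cond2P C i x; have := C x (pred1 i).
by rewrite !big_pred1_eq Dder_addr => /addbI.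
Qed.

Lemma cond2_Dder2_eq0 {gs} : cond2 u g gs ->
  forall i j, i != j -> forall x, Dder (u i) (Dder (u j) g) x = false.
Proof.
move=> C i j ij x; have /cond2P := C => /(_ x (fun k => (k == i) || (k == j))).
rewrite !big_pred2_eq // !(cond2_eq_Dder C) /= /Dder addrA => ->.
by case: (g x); case: (g (x + u i)); case: (g (x + u j)).
Qed.

End ConditionTwo.

Theorem lemma3 (n : nat) (F : finFieldType)
    (hchar : (2%N \in [pchar F])%R) (hcard : #|F| = (2 ^ n)%N)
    (g : F -> bool) (tau : nat) (u : 'I_tau -> F) (hu : injective u) :
  (prop_P u g <-> exists gs : 'I_tau -> F -> bool, cond2 u g gs) /\
  (forall gs : 'I_tau -> F -> bool, cond2 u g gs ->
     forall (i : 'I_tau) (x : F), gs i x = Dder (u i) g x).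
Proof.
split; last by move=> gs; exact: cond2_eq_Dder.
split=> [[_ D2u] | [gs C]].
  exists (fun i => Dder (u i) g); apply: cond2_Dder => i j.
  rewrite neq_ltn => /orP[ij | ji] x; last rewrite DderC; exact: D2u.
by split=> // i j ij x; apply: (cond2_Dder2_eq0 C); rewrite neq_ltn ij.
Qed.
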